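(* Let $H$ be a GCDs-monoid. Then for every $a\in H$ there exist $b\in H$ and $c\in\mathrm{Sqf}\,H$ such that $a=bc$ and, for every $d\in\mathrm{Sqf}\,H$, if $d\mid a$ then $d\mid c$.
   Context: A monoid means a commutative cancellative monoid (written multiplicatively); $H^{\ast}$ is its unit group. $\mathrm{Sqf}\,H$ is the set of elements of $H$ not of the form $b^2c$ with $b,c\in H$, $b\notin H^{\ast}$. $H$ is a GCDs-monoid if every subset of $H$ has a greatest common divisor in $H$. *)

Set Implicit Arguments.

(* A monoid = commutative cancellative monoid, written multiplicatively. *)
Record ccmonoid := CCMonoid {
  carrier :> Type;
  mul : carrier -> carrier -> carrier;
  one : carrier;
  mulA : forall x y z, mul x (mul y z) = mul (mul x y) z;
  mulC : forall x y, mul x y = mul y x;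
  mul1 : forall x, mul one x = x;
  mulK : forall x y z, mul x y = mul x z -> y = z
}.

Arguments mul {c}.
Arguments one {c}.

Section Defs.
Variable H : ccmonoid.

Definition is_unit (u : H) : Prop := exists v : H, mul u v = one.

Definition divides (d a : H) : Prop := exists e : H, a = mul d e.

Definition squarefree (a : H) : Prop :=
  ~ (exists b c : H, ~ is_unit b /\ a = mul (mul b b) c).

Definition is_gcd (S : H -> Prop) (g : H) : Prop :=
  (forall x, S x -> divides g x) /\
  (forall d, (forall x, S x -> divides d x) -> divides d g).

Definition GCDs_monoid : Prop :=
  forall S : H -> Prop, (exists x, S x) -> exists g, is_gcd S g.
End Defs.

Arguments is_unit {H}.
Arguments divides {H}.
Arguments squarefree {H}.
Arguments is_gcd {H}.

(** The wanted [c] is the lcm of the squarefree divisors of [a]: it exists because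
    [a] is a common multiple and a GCDs-monoid has the gcd of all common multiples.
    It is itself squarefree because a squarefree [d] dividing [x*x*y] already divides
    [x*y] (a consequence of Euclid's lemma), so [c = x*x*y] would force [c | x*y],
    i.e. [x] a unit. *)

From Stdlib Require Import Classical.

Section DividesTheory.
Variable H : ccmonoid.
Local Notation "x * y" := (mul x y).

Lemma mulmA (x y z : H) : x * (y * z) = (x * y) * z. Proof. apply mulA. Qed.
Lemma mulmC (x y : H) : x * y = y * x. Proof. apply mulC. Qed.
Lemma mul1m (x : H) : one * x = x. Proof. apply mul1. Qed.
Lemma mulmI (x y z : H) : x * y = x * z -> y = z. Proof. apply mulK. Qed.

Lemma mulm1 (x : H) : x * one = x.
Proof. rewrite mulmC; apply mul1m. Qed.

Lemma mulmCA (x y z : H) : x * (y * z) = y * (x * z).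
Proof. now rewrite !mulmA, (mulmC x y). Qed.

Lemma dvd_refl (a : H) : divides a a.
Proof. exists one; now rewrite mulm1. Qed.

Lemma dvd_mulr (d a b : H) : divides d a -> divides d (a * b).
Proof. intros [u ->]. exists (u * b). now rewrite mulmA. Qed.

Lemma dvd_mull (d a b : H) : divides d b -> divides d (a * b).
Proof. intros h; rewrite mulmC; now apply dvd_mulr. Qed.

Lemma dvd_mul (d e a b : H) : divides d a -> divides e b -> divides (d * e) (a * b).
Proof.
  intros [u ->] [v ->]. exists (u * v).
  rewrite <- !mulmA. f_equal. apply mulmCA.
Qed.

Lemma dvd_mul2l (c d e : H) : divides (c * d) (c * e) -> divides d e.
Proof. intros [f Hf]. exists f. rewrite <- mulmA in Hf. now apply mulmI in Hf. Qed.

Lemma unit_dvd (u x : H) : is_unit u -> divides u x.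
Proof. intros [v Hv]. exists (v * x). now rewrite mulmA, Hv, mul1m. Qed.

Lemma dvd_mulr_unit (d x : H) : divides (d * x) d -> is_unit x.
Proof.
  intros [e He]. exists e. apply (mulmI d).
  rewrite mulmA, <- He. symmetry; apply mulm1.
Qed.

Lemma squarefree_sq_unit (k m : H) : squarefree ((k * k) * m) -> is_unit k.
Proof.
  intros sq. apply NNPP. intros nk. apply sq. exists k, m. now split.
Qed.

Definition coprime (a b : H) : Prop := forall e, divides e a -> divides e b -> is_unit e.

Definition is_lcm (S : H -> Prop) (l : H) : Prop :=
  (forall d, S d -> divides d l) /\
  (forall m, (forall d, S d -> divides d m) -> divides l m).

Section PairGcd.
Hypothesis gcd_pair : forall a b : H, exists g,
  divides g a /\ divides g b /\ forall e, divides e a -> divides e b -> divides e g.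

Lemma gauss {a b z : H} : coprime a b -> divides a (b * z) -> divides a z.
Proof.
  intros cab hab.
  destruct (gcd_pair (z * a) (z * b)) as [g [gza [gzb g_max]]].
  assert (zg : divides z g) by (apply g_max; apply dvd_mulr, dvd_refl).
  destruct zg as [w ->].
  (* [gcd (z*a) (z*b) = z * gcd a b], and [gcd a b] is a unit. *)
  assert (wu : is_unit w) by (apply cab; eapply dvd_mul2l; eassumption).
  destruct wu as [v Hv].
  assert (a_zw : divides a (z * w)).
  { apply g_max; [apply dvd_mull, dvd_refl | now rewrite mulmC]. }
  replace z with ((z * w) * v) by now rewrite <- mulmA, Hv, mulm1.
  now apply dvd_mulr.
Qed.

Lemma gcd_coprime_split (d x : H) :
  exists h d' x', d = h * d' /\ x = h * x' /\ coprime d' x'.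
Proof.
  destruct (gcd_pair d x) as [h [[d' Hd] [[x' Hx] h_max]]].
  exists h, d', x'. split; [assumption | split; [assumption |]].
  intros e ed ex. apply (dvd_mulr_unit h).
  apply h_max; [rewrite Hd | rewrite Hx]; apply dvd_mul; auto using dvd_refl.
Qed.

Lemma squarefree_dvd_sq (d x y : H) :
  squarefree d -> divides d ((x * x) * y) -> divides d (x * y).
Proof.
  intros sq hd.
  (* With [h = gcd d x] and then [k = gcd d' h], we get [d = (k*h') * (k*d'')],
     so squarefreeness makes [k] a unit. *)
  destruct (gcd_coprime_split d x) as [h [d' [x' [-> [-> c_dx]]]]].
  assert (d'_hy : divides d' (h * y)).
  { replace ((h * x') * (h * x') * y) with (h * (x' * (x' * (h * y)))) in hd
      by (rewrite <- !mulmA; f_equal; rewrite (mulmCA h x'); reflexivity).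
    apply dvd_mul2l, (gauss c_dx), (gauss c_dx) in hd. exact hd. }
  destruct (gcd_coprime_split d' h) as [k [d'' [h' [-> [-> c_dh]]]]].
  rewrite <- mulmA in d'_hy. apply dvd_mul2l, (gauss c_dh) in d'_hy.
  assert (ku : is_unit k).
  { apply (squarefree_sq_unit k (h' * d'')).
    replace (k * k * (h' * d'')) with (k * h' * (k * d'')); [exact sq |].
    rewrite <- !mulmA. f_equal. rewrite !mulmA. f_equal. apply mulmC. }
  rewrite <- (mulmA (k * h') x' y). apply dvd_mul; [apply dvd_refl |].
  apply dvd_mul; [apply unit_dvd |]; assumption.
Qed.

Lemma is_lcm_squarefree (S : H -> Prop) (l : H) :
  (forall d, S d -> squarefree d) -> is_lcm S l -> squarefree l.
Proof.
  intros S_sqf [l_mul l_min] [x [y [nx E]]]. apply nx.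
  assert (l_xy : divides l (x * y)).
  { apply l_min. intros d Sd. apply squarefree_dvd_sq; [now apply S_sqf |].
    rewrite <- E. now apply l_mul. }
  destruct l_xy as [e He]. rewrite E in He. exists e.
  apply (mulmI (x * y)). rewrite mulm1.
  transitivity (x * x * y * e); [| now symmetry].
  rewrite <- !mulmA. f_equal. apply mulmCA.
Qed.

End PairGcd.

Section GCDs.
Hypothesis hH : GCDs_monoid H.

Lemma GCDs_monoid_gcd_pair (a b : H) : exists g,
  divides g a /\ divides g b /\ forall e, divides e a -> divides e b -> divides e g.
Proof.
  destruct (hH (fun x => x = a \/ x = b)) as [g [g_dvd g_max]]; [now exists a; left |].
  exists g. split; [apply g_dvd; now left | split; [apply g_dvd; now right |]].
  intros e ea eb. apply g_max. now intros x [-> | ->].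
Qed.

Lemma GCDs_monoid_lcm (S : H -> Prop) (m0 : H) :
  (forall d, S d -> divides d m0) -> exists l, is_lcm S l.
Proof.
  intros m0_mul.
  destruct (hH (fun m => forall d, S d -> divides d m)) as [l [l_dvd l_max]];
    [now exists m0 |].
  exists l. split; [| exact l_dvd].
  intros d Sd. apply l_max. auto.
Qed.

End GCDs.
End DividesTheory.

Theorem proposition4p5 (H : ccmonoid) (hH : GCDs_monoid H) (a : H) :
  exists (b c : H),
    squarefree c /\ a = mul b c /\
    (forall d : H, squarefree d -> divides d a -> divides d c).
Proof.
  set (S := fun d : H => squarefree d /\ divides d a).
  destruct (GCDs_monoid_lcm H hH S a) as [c [c_mul c_min]];
    [now intros d [_ da] |].
  assert (c_sqf : squarefree c).
  { apply (is_lcm_squarefree H (GCDs_monoid_gcd_pair H hH) S c);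
      [now intros d [sd _] | now split]. }
  destruct (c_min a) as [b Hb]; [now intros d [_ da] |].
  exists b, c. split; [exact c_sqf | split].
  - now rewrite mulmC.
  - intros d sd da. apply c_mul. now split.
Qed.
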